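(* $\mathsf{AP}(R_4,R_4)=\mathsf{AP}(R_4,R_5)=\mathsf{AP}(R_5,R_4)=\mathsf{AP}(R_4,R_1)=\mathsf{AP}(R_5,R_1)=\mathsf{L}$.
   Context: Tuples in $\{0,1\}^4$ are written as strings $abcd$. The relations $R_1,\dots,R_5\subseteq\{0,1\}^4$ are $R_1=\{0000,1000,0100,1100,1010,0110,1001,0101,0011,1011,0111,1111\}$, $R_2=\{0000,1000,0100,1100,1010,0101,0011,1111\}$, $R_3=\{0000,1100,1010,0101,0011,1011,0111,1111\}$, $R_4=\{0000,1100,1010,0101,0011,1111\}$, $R_5=\{0000,1100,1010,0110,1001,0101,0011,1111\}$. For $R,S\subseteq\{0,1\}^4$, a Boolean function $f\colon\{0,1\}^n\to\{0,1\}$ is analogy-preserving relative to $(R,S)$ if for all $\mathbf{a},\mathbf{b},\mathbf{c},\mathbf{d}\in\{0,1\}^n$ with $(a_i,b_i,c_i,d_i)\in R$ for every $i$ and such that $(f(\mathbf{a}),f(\mathbf{b}),f(\mathbf{c}),x)\in S$ for some $x\in\{0,1\}$, we have $(f(\mathbf{a}),f(\mathbf{b}),f(\mathbf{c}),f(\mathbf{d}))\in S$; $\mathsf{AP}(R,S)$ is the set of all such functions of all arities. $\mathsf{L}$ is the set of affine Boolean functions $f(x_1,\dots,x_n)=c+a_1x_1+\dots+a_nx_n\pmod 2$ with $c,a_i\in\{0,1\}$. *)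

From mathcomp Require Import all_boot.
Set Implicit Arguments. Unset Strict Implicit. Unset Printing Implicit Defensive.

Definition rel4 := bool -> bool -> bool -> bool -> bool.

(* Helper: membership of abcd in an explicit list of strings of 0/1 digits,
   each tuple written as the number whose decimal digits are a,b,c,d.  *)
Definition code4 (a b c d : bool) : nat :=
  1000 * a + 100 * b + 10 * c + d.

Definition rel_of (l : seq nat) : rel4 := fun a b c d => code4 a b c d \in l.

Definition R1 : rel4 := rel_of
  [:: 0000; 1000; 0100; 1100; 1010; 0110; 1001; 0101; 0011; 1011; 0111; 1111].
Definition R2 : rel4 := rel_of [:: 0000; 1000; 0100; 1100; 1010; 0101; 0011; 1111].
Definition R3 : rel4 := rel_of [:: 0000; 1100; 1010; 0101; 0011; 1011; 0111; 1111].
Definition R4 : rel4 := rel_of [:: 0000; 1100; 1010; 0101; 0011; 1111].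
Definition R5 : rel4 := rel_of [:: 0000; 1100; 1010; 0110; 1001; 0101; 0011; 1111].

Definition boolfun (n : nat) := ('I_n -> bool) -> bool.

Definition analogy_preserving (R S : rel4) (n : nat) (f : boolfun n) : Prop :=
  forall a b c d : 'I_n -> bool,
    (forall i, R (a i) (b i) (c i) (d i)) ->
    (exists x : bool, S (f a) (f b) (f c) x) ->
    S (f a) (f b) (f c) (f d).

Definition affine (n : nat) (f : boolfun n) : Prop :=
  exists (c : bool) (w : 'I_n -> bool),
    forall x : 'I_n -> bool, f x = c (+) \big[addb/false]_(i < n) (w i && x i).

Definition AP_eq_L (R S : rel4) : Prop :=
  forall (n : nat) (f : boolfun n), analogy_preserving R S f <-> affine f.

(* An analogy a : b :: c : d with every coordinate in R5 has d = a + b + c, so affine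
   maps send it to an analogy of the same shape, which every S among R4, R5, R1
   accepts. Conversely, for disjoint x, y the quadruples (0, x, y, x + y) and
   (x + y, y, x, 0) are coordinatewise in R4, and for these S the two completions
   they force pin down f (x + y) = f 0 + f x + f y. Summing over the support of a
   vector, this additivity on disjoint vectors makes f affine. *)
From Stdlib Require Import FunctionalExtensionality.
From mathcomp Require Import all_boot.
Set Implicit Arguments. Unset Strict Implicit. Unset Printing Implicit Defensive.

Definition completion (S : rel4) (p q r d : bool) : bool :=
  (S p q r false || S p q r true) ==> S p q r d.

Lemma completionP (S : rel4) p q r d :
  reflect ((exists x, S p q r x) -> S p q r d) (completion S p q r d).
Proof.
apply: (iffP implyP) => [H [x Sx] | H Sx]; apply: H.
- by case: x Sx => ->; rewrite ?orbT.
- by case/orP: Sx; eexists; eassumption.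
Qed.

Lemma analogy_preservingP (R S : rel4) n (f : boolfun n) :
  analogy_preserving R S f <->
  (forall a b c d, (forall i, R (a i) (b i) (c i) (d i)) ->
     completion S (f a) (f b) (f c) (f d)).
Proof.
split=> [fP a b c d Rabcd | fP a b c d Rabcd].
- by apply/completionP; apply: fP.
- exact/completionP/fP.
Qed.

Lemma analogy_preserving_sub (R R' S : rel4) n (f : boolfun n) :
  (forall a b c d, R a b c d -> R' a b c d) ->
  analogy_preserving R' S f -> analogy_preserving R S f.
Proof. by move=> sRR' fP a b c d Rabcd; apply: fP => i; apply: sRR'. Qed.

Section Sufficiency.

Variables (n : nat) (f : boolfun n).
Hypothesis f_affine : affine f.

Lemma affine_addb3 (a b c : 'I_n -> bool) :
  f (fun i => a i (+) b i (+) c i) = f a (+) f b (+) f c.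
Proof.
have [c0 [w fE]] := f_affine; rewrite !fE.
rewrite (eq_bigr (fun i => (w i && a i) (+) (w i && b i) (+) (w i && c i)));
  last by move=> i _; case: (w i).
rewrite !big_split /=; clear fE.
by case: c0; case: (\big[addb/false]_i _); case: (\big[addb/false]_i _);
   case: (\big[addb/false]_i _).
Qed.

Lemma affine_analogy_preserving (R S : rel4) :
  (forall a b c d, R a b c d -> d = a (+) b (+) c) ->
  (forall p q r, completion S p q r (p (+) q (+) r)) ->
  analogy_preserving R S f.
Proof.
move=> R_addb S_addb; apply/analogy_preservingP => a b c d Rabcd.
have -> : d = (fun i => a i (+) b i (+) c i).
  by apply: functional_extensionality => i; apply: R_addb.
by rewrite affine_addb3.
Qed.

End Sufficiency.

Section Necessity.

Variables (n : nat) (f : boolfun n).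

Let zero : 'I_n -> bool := fun _ => false.

Section DisjointAdditive.

Hypothesis f_disjoint_add : forall x y : 'I_n -> bool, (forall i, ~~ (x i && y i)) ->
  f (fun i => x i (+) y i) = f zero (+) f x (+) f y.

Let w i := f (pred1 i) (+) f zero.

Lemma disjoint_additive_indicator (s : seq 'I_n) : uniq s ->
  f (fun i => i \in s) = f zero (+) \big[addb/false]_(i <- s) w i.
Proof.
elim: s => [_ | i s IHs /= /andP [s'i /IHs f_s]]; first by rewrite big_nil addbF.
have -> : (fun j => j \in i :: s) = (fun j => pred1 i j (+) (j \in s)).
  apply: functional_extensionality => j; rewrite inE /=.
  by case: eqP => [-> | //]; rewrite (negbTE s'i).
rewrite f_disjoint_add; last by move=> j /=; case: eqP => [-> |].
rewrite f_s big_cons /w.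
by case: (f zero); case: (f (pred1 i)); case: (\big[addb/false]_(j <- s) _).
Qed.

Lemma disjoint_additive_affine : affine f.
Proof.
exists (f zero), w => x.
have -> : x = (fun i => i \in enum x).
  by apply: functional_extensionality => i; rewrite mem_enum.
rewrite disjoint_additive_indicator ?enum_uniq // big_enum big_mkcond /=.
congr (_ (+) _); apply: eq_bigr => i _.
by rewrite mem_enum unfold_in; case: (x i); rewrite ?andbT ?andbF.
Qed.

End DisjointAdditive.

Variable S : rel4.
Hypothesis S_forces_addb : forall o x y z,
  completion S o x y z -> completion S z y x o -> z = o (+) x (+) y.

Lemma analogy_preserving_disjoint_additive :
  analogy_preserving R4 S f ->
  forall x y : 'I_n -> bool, (forall i, ~~ (x i && y i)) ->
    f (fun i => x i (+) y i) = f zero (+) f x (+) f y.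
Proof.
move=> /analogy_preservingP fP x y xy_disj.
by apply: S_forces_addb; apply: fP => i; move: (xy_disj i);
   rewrite /zero; case: (x i); case: (y i).
Qed.

End Necessity.

Lemma AP_eq_L_between (R S : rel4) :
  (forall a b c d, R4 a b c d -> R a b c d) ->
  (forall a b c d, R a b c d -> d = a (+) b (+) c) ->
  (forall p q r, completion S p q r (p (+) q (+) r)) ->
  (forall o x y z, completion S o x y z -> completion S z y x o -> z = o (+) x (+) y) ->
  AP_eq_L R S.
Proof.
move=> sR4R R_addb S_addb S_forces n f; split => [fP | f_affine].
- apply/disjoint_additive_affine/(analogy_preserving_disjoint_additive S_forces).
  exact: analogy_preserving_sub sR4R fP.
- exact: (affine_analogy_preserving f_affine R_addb S_addb).
Qed.

Theorem mainTheorem11 :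
  AP_eq_L R4 R4 /\ AP_eq_L R4 R5 /\ AP_eq_L R5 R4 /\ AP_eq_L R4 R1 /\ AP_eq_L R5 R1.
Proof.
pose good S := [\/ S = R4, S = R5 | S = R1].
have S_addb S : good S -> forall p q r, completion S p q r (p (+) q (+) r).
  by case=> ->; do 3!case.
have S_forces S : good S ->
    forall o x y z, completion S o x y z -> completion S z y x o -> z = o (+) x (+) y.
  by case=> ->; do 4!case.
have R4_sub_R5 a b c d : R4 a b c d -> R5 a b c d by move: a b c d; do 4!case.
have R5_addb a b c d : R5 a b c d -> d = a (+) b (+) c by move: a b c d; do 4!case.
have R4_addb a b c d : R4 a b c d -> d = a (+) b (+) c by move/R4_sub_R5/R5_addb.
have AP_R4 S : good S -> AP_eq_L R4 S.
  by move=> gS; apply: AP_eq_L_between (S_addb S gS) (S_forces S gS).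
have AP_R5 S : good S -> AP_eq_L R5 S.
  by move=> gS; apply: AP_eq_L_between R4_sub_R5 R5_addb (S_addb S gS) (S_forces S gS).
split; first exact/AP_R4/Or31.
split; first exact/AP_R4/Or32.
split; first exact/AP_R5/Or31.
by split; [exact/AP_R4/Or33 | exact/AP_R5/Or33].
Qed.
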